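(* Let $m\geq1$ and $n\geq2$. Then the identities satisfied by the semigroup $\mathbb{Z}_m\times N_n^I\times L_2^I\times R_2^I\times A_0^I$ are axiomatized by \[x^{m+n}\approx x^n,\quad x^{m+n-1}yx\approx x^{n-1}yx,\quad x^2yx\approx xyx^2,\quad xyxzx\approx x^2yzx.\]
   Context: $\mathbb{Z}_m$ is the cyclic group of order $m$; $N_n=\langle a\mid a^n=0\rangle$ is the monogenic nilpotent semigroup of order $n$; $L_2$ and $R_2$ are the left zero ($xy=x$) and right zero ($xy=y$) semigroups of order two; $A_0=\langle e,f\mid e^2=e,\ f^2=f,\ ef=0\rangle=\{0,e,f,fe\}$. For a semigroup $S$, $S^I$ is $S$ with an external identity element adjoined. Identities are between words over a countably infinite alphabet of variables. *)

From mathcomp Require Import all_boot.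
Set Implicit Arguments. Unset Strict Implicit. Unset Printing Implicit Defensive.

(* Variables are natural numbers; a word is a NONEMPTY sequence of variables
   (nonemptiness is imposed where words are used). *)
Definition word := seq nat.

Definition evalw {T : Type} (op : T -> T -> T) (phi : nat -> T) (w : word) : option T :=
  match w with
  | [::] => None
  | a :: s => Some (foldl (fun acc x => op acc (phi x)) (phi a) s)
  end.

Definition satisfies {T : Type} (op : T -> T -> T) (u v : word) : Prop :=
  forall phi : nat -> T, evalw op phi u = evalw op phi v.

Definition wsubst (sigma : nat -> word) (w : word) : word := flatten (map sigma w).

(* Equational (Birkhoff) derivability of u ~ v from a set of semigroup identities
   Ax: the fully invariant congruence on the free semigroup generated by Ax. *)
Inductive derivable (Ax : word -> word -> Prop) : word -> word -> Prop :=
| der_ax u v : Ax u v -> derivable Ax u v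
| der_refl u : derivable Ax u u
| der_sym u v : derivable Ax u v -> derivable Ax v u
| der_trans u v w : derivable Ax u v -> derivable Ax v w -> derivable Ax u w
| der_subst (sigma : nat -> word) u v :
    (forall x, sigma x != [::]) -> derivable Ax u v ->
    derivable Ax (wsubst sigma u) (wsubst sigma v)
| der_mul (w1 w2 : word) u v :
    derivable Ax u v -> derivable Ax (w1 ++ u ++ w2) (w1 ++ v ++ w2).

(* The four identities, with x = 0, y = 1, z = 2:
   x^{m+n} ~ x^n,  x^{m+n-1} y x ~ x^{n-1} y x,  x^2 y x ~ x y x^2,
   x y x z x ~ x^2 y z x. *)
Inductive Ax6p5 (m n : nat) : word -> word -> Prop :=
| ax1 : Ax6p5 m n (nseq (m + n) 0) (nseq n 0)
| ax2 : Ax6p5 m n (nseq (m + n - 1) 0 ++ [:: 1; 0]) (nseq (n - 1) 0 ++ [:: 1; 0])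
| ax3 : Ax6p5 m n [:: 0; 0; 1; 0] [:: 0; 1; 0; 0]
| ax4 : Ax6p5 m n [:: 0; 1; 0; 2; 0] [:: 0; 0; 1; 2; 0].

Lemma Zm_lt (m : nat) (a b : 'I_m) : (a + b) %% m < m.
Proof. by rewrite ltn_pmod // (leq_ltn_trans (leq0n a) (ltn_ord a)). Qed.
Definition Zm_op (m : nat) (a b : 'I_m) : 'I_m := Ordinal (Zm_lt a b).

(* N_n = <a | a^n = 0>: carrier 'I_n, where i < n-1 stands for a^(i+1)
   and n-1 stands for 0 = a^n. *)
Lemma Nn_lt (n : nat) (a b : 'I_n) : minn (a + b).+1 n.-1 < n.
Proof.
have n0 : 0 < n by rewrite (leq_ltn_trans (leq0n a) (ltn_ord a)).
by rewrite (leq_ltn_trans (geq_minr _ _)) // prednK.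
Qed.
Definition Nn_op (n : nat) (a b : 'I_n) : 'I_n := Ordinal (Nn_lt a b).

Definition L2_op (a b : bool) : bool := a.
Definition R2_op (a b : bool) : bool := b.

(* A_0 = <e, f | e^2 = e, f^2 = f, ef = 0> = {0, e, f, fe} *)
Inductive A0 := A0zero | A0e | A0f | A0fe.
Definition A0_op (a b : A0) : A0 :=
  match a, b with
  | A0zero, _ | _, A0zero => A0zero
  | A0e, A0e => A0e
  | A0e, A0f => A0zero
  | A0e, A0fe => A0zero
  | A0f, A0e => A0fe
  | A0f, A0f => A0f
  | A0f, A0fe => A0fe
  | A0fe, A0e => A0fe
  | A0fe, A0f => A0zero
  | A0fe, A0fe => A0zero
  end.

Definition adjI {T : Type} (op : T -> T -> T) (a b : option T) : option T :=
  match a, b with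
  | None, _ => b
  | _, None => a
  | Some x, Some y => Some (op x y)
  end.

Definition S6p5 (m n : nat) : Type :=
  ('I_m * option 'I_n * option bool * option bool * option A0)%type.

Definition S6p5_op (m n : nat) (a b : S6p5 m n) : S6p5 m n :=
  match a, b with
  | (z, p, l, r, e), (z', p', l', r', e') =>
    (Zm_op z z', adjI (@Nn_op n) p p', adjI L2_op l l', adjI R2_op r r',
     adjI A0_op e e')
  end.

Lemma Zm_assoc m : associative (@Zm_op m).
Proof. by move=> a b c; apply: val_inj => /=; rewrite modnDml modnDmr addnA. Qed.
Lemma A0_assoc : associative A0_op.
Proof. by do 3 case. Qed.
Lemma adjI_assoc T (op : T -> T -> T) : associative op -> associative (adjI op).
Proof. by move=> H [a|] [b|] [c|] //=; rewrite H. Qed.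

From mathcomp Require Import all_boot zify.
Set Implicit Arguments. Unset Strict Implicit. Unset Printing Implicit Defensive.

(* Soundness: each of the five factors is a semigroup satisfying the four
   identities, and satisfaction is closed under equational derivation.
   Completeness: every word derives a normal form in which a letter x with k
   occurrences is written x^(c-1) at its first occurrence and once more at its
   last one (a single x if k = 1), c being k reduced by x^(m+n) = x^n; these
   blocks are ordered like the first and last occurrences they stand for.  The
   normal form is determined by data that the factors detect: k mod m (Z_m),
   min(k, n) (N_n^I), the order of first occurrences (L_2^I), of last
   occurrences (R_2^I), and whether the first x precedes the last z (A_0^I,
   under x |-> e, z |-> f).  Hence words identified in the product have the
   same normal form. *)

(** * Evaluating words *)

Section Evaluation.
Variables (T : Type) (op : T -> T -> T).
Implicit Types (phi : nat -> T) (w : word).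

Lemma evalw_ext_op (op' : T -> T -> T) phi w :
  op =2 op' -> evalw op phi w = evalw op' phi w.
Proof.
move=> eq_op; case: w => //= a s; congr Some.
by elim: s (phi a) => //= b s IH t; rewrite eq_op IH.
Qed.

Lemma evalw_morph (C : Type) (opC : C -> C -> C) (f : T -> C) phi w :
  {morph f : a b / op a b >-> opC a b} ->
  evalw opC (fun x => f (phi x)) w = omap f (evalw op phi w).
Proof.
move=> fM; case: w => //= a s; congr Some.
by elim: s (phi a) => //= b s IH t; rewrite -fM IH.
Qed.

Lemma evalw_recursive (F : word -> T) phi :
    (forall a, F [:: a] = phi a) ->
    (forall s a, s != [::] -> F (rcons s a) = op (F s) (phi a)) ->
  forall w, w != [::] -> evalw op phi w = Some (F w).
Proof.
move=> F1 FS [//|a s] _; elim/last_ind: s => [|s b IH] /=; first by rewrite F1.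
by case: IH => IH; rewrite foldl_rcons IH -(FS (a :: s)).
Qed.

Lemma satisfies_invariant (F : word -> T) phi u v :
    (forall a, F [:: a] = phi a) ->
    (forall s a, s != [::] -> F (rcons s a) = op (F s) (phi a)) ->
  satisfies op u v -> u != [::] -> v != [::] -> F u = F v.
Proof.
move=> F1 FS uv nu nv.
by move: (uv phi); rewrite !(evalw_recursive F1 FS) // => -[].
Qed.

Definition powsucc (a : T) (k : nat) : T := iter k (op^~ a) a.

Lemma evalw_nseq phi x k : evalw op phi (nseq k.+1 x) = Some (powsucc (phi x) k).
Proof.
congr Some; rewrite /powsucc; move: {1 3}(phi x).
by elim: k => // k IH t; rewrite iterSr -IH.
Qed.

Hypothesis opA : associative op.

Lemma evalw_cat phi s1 s2 :
  evalw op phi (s1 ++ s2) = adjI op (evalw op phi s1) (evalw op phi s2).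
Proof.
case: s1 => [|a s1] /=; first by case: (evalw op phi s2).
rewrite foldl_cat; case: s2 => //= b s2; congr Some.
by elim: s2 (phi b) => //= c s2 IH t; rewrite -IH opA.
Qed.

Lemma evalw_wsubst phi (sigma : nat -> word) w :
  (forall x, sigma x != [::]) ->
  evalw op phi (wsubst sigma w) =
  evalw op (fun x => odflt (phi 0) (evalw op phi (sigma x))) w.
Proof.
move=> sigma_ne; elim: w => // x w IH.
rewrite (_ : wsubst _ _ = sigma x ++ wsubst sigma w) // -cat1s !evalw_cat IH /=.
by case: (sigma x) (sigma_ne x).
Qed.

Lemma derivable_satisfies (Ax : word -> word -> Prop) :
    (forall u v, Ax u v -> satisfies op u v) ->
  forall u v, derivable Ax u v -> satisfies op u v.
Proof.
move=> AxP u v; elim=> {u v} [u v /AxP //|//|u v _ IH phi|u v w _ IH _ IH' phi||].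
- by rewrite IH.
- by rewrite IH IH'.
- by move=> sigma u v sigma_ne _ IH phi; rewrite !evalw_wsubst // IH.
- by move=> w1 w2 u v _ IH phi; rewrite !evalw_cat IH.
Qed.

End Evaluation.

Lemma eq_satisfies (T : Type) (op op' : T -> T -> T) u v :
  op =2 op' -> satisfies op u v <-> satisfies op' u v.
Proof.
by move=> eq_op; split=> uv phi; [move: (uv phi)|]; rewrite !(evalw_ext_op _ _ eq_op).
Qed.

Lemma evalw_rev (T : Type) (op : T -> T -> T) (phi : nat -> T) (w : word) :
  associative op -> evalw op phi (rev w) = evalw (fun a b => op b a) phi w.
Proof.
move=> opA; have opA' : associative (fun a b => op b a) by move=> a b c; rewrite opA.
elim: w => // x w IH; rewrite rev_cons -cats1 (evalw_cat opA) IH.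
by rewrite -[x :: w]cat1s (evalw_cat opA'); case: (evalw _ phi w).
Qed.

Lemma satisfies_rev (T : Type) (op : T -> T -> T) u v : associative op ->
  satisfies op u v -> satisfies (fun a b => op b a) (rev u) (rev v).
Proof.
move=> opA uv phi; have opA' : associative (fun a b => op b a) by move=> a b c; rewrite opA.
by rewrite !(evalw_rev _ _ opA'); apply: uv.
Qed.

Definition prod_op (A B : Type) (opA : A -> A -> A) (opB : B -> B -> B)
  (a b : A * B) : A * B := (opA a.1 b.1, opB a.2 b.2).

Lemma satisfies_prod (A B : Type) (opA : A -> A -> A) (opB : B -> B -> B)
    (a0 : A) (b0 : B) u v :
  satisfies (prod_op opA opB) u v <-> satisfies opA u v /\ satisfies opB u v.
Proof.
split=> [uv|[uvA uvB] phi].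
  split=> phi.
    have := congr1 (omap fst) (uv (fun x => (phi x, b0))).
    by rewrite -!(evalw_morph (opC := opA)).
  have := congr1 (omap snd) (uv (fun x => (a0, phi x))).
  by rewrite -!(evalw_morph (opC := opB)).
have := uvA (fun x => (phi x).1); have := uvB (fun x => (phi x).2).
rewrite !(evalw_morph (op := prod_op opA opB)) //.
by case: (evalw _ phi u) => [[? ?]|]; case: (evalw _ phi v) => [[? ?]|] //= [->] [->].
Qed.

Section Ax6p5Models.
Variables (m n : nat) (hm : 0 < m) (hn : 1 < n).
Variables (T : Type) (op : T -> T -> T) (opA : associative op).
Local Notation pw := (powsucc op).

Lemma Ax6p5_satisfies :
    (forall a, pw a (m + n - 1) = pw a (n - 1)) ->
    (forall a y, op (pw a (m + n - 2)) (op y a) = op (pw a (n - 2)) (op y a)) ->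
    (forall a y, op (op (op a a) y) a = op (op (op a y) a) a) ->
    (forall a y z, op (op (op (op a y) a) z) a = op (op (op (op a a) y) z) a) ->
  forall u v, Ax6p5 m n u v -> satisfies op u v.
Proof.
move=> pow_law mid_law law3 law4 u v [] phi /=; rewrite ?law3 ?law4 //.
  have -> : m + n = (m + n - 1).+1 by lia.
  by rewrite -[in RHS](subnK (ltnW hn)) addn1 !evalw_nseq pow_law.
have -> : m + n - 1 = (m + n - 2).+1 by lia.
have -> : n - 1 = (n - 2).+1 by lia.
by rewrite !(evalw_cat opA) !evalw_nseq /= mid_law.
Qed.

Lemma Ax6p5_satisfies_comm :
    commutative op -> (forall a, pw a (m + n - 1) = pw a (n - 1)) ->
  forall u v, Ax6p5 m n u v -> satisfies op u v.
Proof.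
move=> opC pow_law; have opAC a b c : op (op a b) c = op (op a c) b.
  by rewrite -opA [op b c]opC opA.
apply: Ax6p5_satisfies => // [a y|a y|a y z]; rewrite ?[op (op a y) a]opAC //.
have pwS k : op (pw a k) a = pw a k.+1 by [].
rewrite !opA ![op (op (pw a _) y) a]opAC !pwS.
have -> : (m + n - 2).+1 = m + n - 1 by lia.
have -> : (n - 2).+1 = n - 1 by lia.
by rewrite pow_law.
Qed.

Lemma Ax6p5_satisfies_aperiodic :
    (forall a, op (op a a) a = op a a) ->
    (forall a y, op (op (op a a) y) a = op (op a y) a) ->
    (forall a y, op (op (op a a) y) a = op (op (op a y) a) a) ->
    (forall a y z, op (op (op (op a y) a) z) a = op (op (op (op a a) y) z) a) ->
  forall u v, Ax6p5 m n u v -> satisfies op u v.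
Proof.
move=> cube_law mid_law law3 law4.
have pwS a k : pw a k.+1 = op a a.
  by elim: k => // k IH; rewrite /powsucc iterS -/(powsucc op a k.+1) IH cube_law.
apply: Ax6p5_satisfies => // [a|a y].
  have -> : m + n - 1 = (m + n - 2).+1 by lia.
  have -> : n - 1 = (n - 2).+1 by lia.
  by rewrite !pwS.
have -> : m + n - 2 = (m + n - 3).+1 by lia.
by case: (n - 2) => [|k]; rewrite ?pwS // opA mid_law -opA.
Qed.

End Ax6p5Models.

(** * The five factors *)

Lemma Zm_opC m : commutative (@Zm_op m).
Proof. by move=> a b; apply: val_inj; rewrite /= addnC. Qed.

Lemma val_Zm_powsucc m (a : 'I_m) k : val (powsucc (@Zm_op m) a k) = (k.+1 * a) %% m.
Proof.
elim: k => [|k IH] /=; first by rewrite mul1n modn_small.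
by rewrite IH modnDml mulSn addnC.
Qed.

Section NilpotentMonogenic.
Variable n : nat.
Local Notation NI := (adjI (@Nn_op n)).

Lemma Nn_assoc : associative (@Nn_op n).
Proof. by move=> a b c; apply: val_inj => /=; have := ltn_ord a; lia. Qed.

Definition Nn_exp (p : option 'I_n) : nat := if p is Some i then i.+1 else 0.

Lemma Nn_exp_le p : Nn_exp p <= n.
Proof. by case: p => // i; apply: ltn_ord. Qed.

Lemma Nn_exp_inj : injective Nn_exp.
Proof. by case=> [i|] [j|] //= [eq_ij]; congr Some; apply: val_inj. Qed.

Lemma Nn_exp_op p q : Nn_exp (NI p q) = minn (Nn_exp p + Nn_exp q) n.
Proof. by move: (Nn_exp_le p) (Nn_exp_le q); case: p q => [i|] [j|] /=; lia. Qed.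

Lemma adjI_Nn_opC : commutative NI.
Proof. by move=> p q; apply: Nn_exp_inj; rewrite !Nn_exp_op addnC. Qed.

Lemma Nn_exp_powsucc p k : Nn_exp (powsucc NI p k) = minn (k.+1 * Nn_exp p) n.
Proof.
have := Nn_exp_le p; elim: k => [|k IH] le_p_n /=; first by lia.
by rewrite -/(powsucc NI p k) Nn_exp_op IH //; nia.
Qed.

Definition Nn_pow (k : nat) : option 'I_n :=
  if k is k'.+1 then insub (minn k' n.-1) else None.

Lemma Nn_exp_pow k : 0 < n -> Nn_exp (Nn_pow k) = minn k n.
Proof.
move=> n_gt0; case: k => [|k] /=; first by rewrite min0n.
by case: (insubP (ordinal n) (minn k n.-1)) => [i _ /= -> | ]; lia.
Qed.

End NilpotentMonogenic.

Section FactorModels.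
Variables (m n : nat) (hm : 0 < m) (hn : 1 < n).

Lemma Zm_Ax6p5 u v : Ax6p5 m n u v -> satisfies (@Zm_op m) u v.
Proof.
apply: Ax6p5_satisfies_comm => //; [exact: Zm_assoc | exact: Zm_opC |] => a.
apply: val_inj; rewrite !val_Zm_powsucc.
have -> : (m + n - 1).+1 = m + n by lia.
have -> : (n - 1).+1 = n by lia.
by rewrite mulnDl [m * _]mulnC modnMDl.
Qed.

Lemma Nn_Ax6p5 u v : Ax6p5 m n u v -> satisfies (adjI (@Nn_op n)) u v.
Proof.
apply: Ax6p5_satisfies_comm => //; [exact/adjI_assoc/Nn_assoc | exact: adjI_Nn_opC |] => p.
apply: Nn_exp_inj; rewrite !Nn_exp_powsucc; have := Nn_exp_le p.
by case: (Nn_exp p) => [|e] le_e_n; [rewrite !muln0 | nia].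
Qed.

Lemma L2_Ax6p5 u v : Ax6p5 m n u v -> satisfies (adjI L2_op) u v.
Proof.
by apply: Ax6p5_satisfies_aperiodic => //; [exact: adjI_assoc | ..]; do ?case=> [[]|].
Qed.

Lemma R2_Ax6p5 u v : Ax6p5 m n u v -> satisfies (adjI R2_op) u v.
Proof.
by apply: Ax6p5_satisfies_aperiodic => //; [exact: adjI_assoc | ..]; do ?case=> [[]|].
Qed.

Lemma A0_Ax6p5 u v : Ax6p5 m n u v -> satisfies (adjI A0_op) u v.
Proof.
by apply: Ax6p5_satisfies_aperiodic => //; [exact/adjI_assoc/A0_assoc | ..]; do ?case=> [[]|].
Qed.

End FactorModels.

Lemma S6p5_opE m n :
  @S6p5_op m n =2 prod_op (prod_op (prod_op (prod_op (@Zm_op m) (adjI (@Nn_op n)))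
                                    (adjI L2_op)) (adjI R2_op)) (adjI A0_op).
Proof. by case=> [[[[? ?] ?] ?] ?] [[[[? ?] ?] ?] ?]. Qed.

Lemma satisfies_S6p5 m n u v : 0 < m ->
  satisfies (@S6p5_op m n) u v <->
  [/\ satisfies (@Zm_op m) u v, satisfies (adjI (@Nn_op n)) u v,
      satisfies (adjI L2_op) u v, satisfies (adjI R2_op) u v
    & satisfies (adjI A0_op) u v].
Proof.
move=> hm; pose z0 : 'I_m := Ordinal hm.
rewrite (eq_satisfies _ _ (@S6p5_opE m n)) (satisfies_prod _ _ (z0, None, None, None) None).
rewrite (satisfies_prod _ _ (z0, None, None) None) (satisfies_prod _ _ (z0, None) None).
rewrite (satisfies_prod _ _ z0 None).
by split=> [[[[[]]]]|[]].
Qed.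

Lemma S6p5_derivable_satisfies m n u v : 0 < m -> 1 < n ->
  derivable (Ax6p5 m n) u v -> satisfies (@S6p5_op m n) u v.
Proof.
move=> hm hn uv; rewrite satisfies_S6p5 //.
split; apply: (derivable_satisfies _ _ uv).
- exact: Zm_assoc.
- exact: Zm_Ax6p5.
- exact/adjI_assoc/Nn_assoc.
- exact: Nn_Ax6p5.
- exact: adjI_assoc.
- exact: L2_Ax6p5.
- exact: adjI_assoc.
- exact: R2_Ax6p5.
- exact/adjI_assoc/A0_assoc.
- exact: A0_Ax6p5.
Qed.

(** * First and last occurrences *)

Lemma mem_rem_neq (T : eqType) (x y : T) (s : seq T) :
  y != x -> (y \in rem x s) = (y \in s).
Proof. by move=> ne_yx; apply/idP/idP; [apply: mem_rem | apply: rem_mem]. Qed.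

Lemma rem_cat_notin (T : eqType) (x : T) (s1 s2 : seq T) :
  x \notin s1 -> rem x (s1 ++ s2) = s1 ++ rem x s2.
Proof.
by elim: s1 => //= y s1 IH; rewrite in_cons negb_or eq_sym => /andP [/negbTE -> /IH ->].
Qed.

Section Occurrences.
Implicit Types (w s : word) (x z a : nat).

Lemma count_mem_rcons x s a : count_mem x (rcons s a) = count_mem x s + (a == x).
Proof. by rewrite -cats1 count_cat /= addn0. Qed.

Lemma count_mem_rcons_neq x s a : x != a -> count_mem x (rcons s a) = count_mem x s.
Proof. by move=> xa; rewrite count_mem_rcons eq_sym (negbTE xa) addn0. Qed.

Lemma index_rcons x s a :
  index x (rcons s a) =
  if x \in s then index x s else if x == a then size s else (size s).+1.
Proof.
rewrite -cats1 index_cat; case: ifP => // _ /=; rewrite eq_sym.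
by case: (x == a); rewrite ?addn0 ?addn1.
Qed.

(* When x does not occur in w, truncated subtraction makes [last_index x w = 0];
   [occurs_before] below relies on this. *)
Definition last_index x w := size w - (index x (rev w)).+1.

Lemma last_index_notin x w : x \notin w -> last_index x w = 0.
Proof.
move=> xw; rewrite /last_index memNindex ?mem_rev // size_rev.
by apply/eqP; rewrite subn_eq0.
Qed.

Lemma last_index_rcons x s a :
  last_index x (rcons s a) = if x == a then size s else last_index x s.
Proof.
rewrite /last_index rev_rcons size_rcons /= eq_sym.
by have := index_size x (rev s); rewrite size_rev; case: (x == a) => /=; lia.
Qed.

Lemma last_index_lt x w : x \in w -> last_index x w < size w.
Proof. by rewrite /last_index; case: w => //= *; lia. Qed.

Lemma nth_last_index x0 x w : x \in w -> nth x0 w (last_index x w) = x.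
Proof.
move=> xw; rewrite /last_index -nth_rev ?nth_index ?mem_rev //.
by rewrite -size_rev index_mem mem_rev.
Qed.

Lemma ltn_last_index x z w : x \in w -> z \in w ->
  (last_index x w < last_index z w) = (index z (rev w) < index x (rev w)).
Proof.
rewrite /last_index -!(mem_rev w) -!index_mem size_rev.
by move: (size w) (index x _) (index z _) => k i j hi hj; apply/idP/idP; lia.
Qed.

Lemma index_le_last_index x w : x \in w -> index x w <= last_index x w.
Proof.
elim/last_ind: w => // s a IH.
rewrite mem_rcons in_cons index_rcons last_index_rcons.
case: (x =P a) => [->|_] /= xs; last by rewrite xs IH.
by case: ifP => // _; rewrite index_size.
Qed.

Lemma index_lt_last_index x w : 1 < count_mem x w -> index x w < last_index x w.
Proof.
elim/last_ind: w => // s a IH.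
rewrite count_mem_rcons index_rcons last_index_rcons.
have xs_cnt : 0 < count_mem x s -> x \in s by rewrite -has_pred1 has_count.
case: (eqVneq x a) => [_|_] /=.
  by rewrite addn1 ltnS => /xs_cnt xs; rewrite xs index_mem.
by rewrite addn0 => cnt; rewrite xs_cnt ?IH //; apply: ltnW.
Qed.

Definition occurs_before x z w := index x w < last_index z w.

Lemma occurs_before_rcons x z s a : x != z ->
  occurs_before x z (rcons s a) = occurs_before x z s || (a == z) && (x \in s).
Proof.
move=> xz; rewrite /occurs_before index_rcons last_index_rcons.
have last_le : last_index z s <= size s by apply: leq_subr.
case: ifP => xs; last first.
  rewrite (memNindex (negbT xs)) andbF orbF [in RHS]ltnNge last_le.
  by apply/negbTE; rewrite -leqNgt; case: ifP; case: ifP => _ _; lia.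
rewrite andbT; case: (eqVneq z a) => _; last by rewrite orbF.
by rewrite index_mem xs orbT.
Qed.

Lemma occurs_before_mem x z w : occurs_before x z w -> (x \in w) && (z \in w).
Proof.
rewrite /occurs_before => lt_xz; apply/andP; split.
  by rewrite -index_mem (leq_trans lt_xz) // leq_subr.
by apply: contraLR lt_xz => /last_index_notin ->.
Qed.

(* The events of w in order of position: (x, false) at the first occurrence of
   each letter x, and (x, true) at its last occurrence when x occurs at least
   twice. *)
Fixpoint events_rev (r : word) : seq (nat * bool) :=
  if r is a :: r' then
    if a \in r' then rcons (rem (a, true) (events_rev r')) (a, true)
    else rcons (events_rev r') (a, false)
  else [::].

Definition events w := events_rev (rev w).

Lemma events_rcons w a :
  events (rcons w a) =
  if a \in w then rcons (rem (a, true) (events w)) (a, true)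
  else rcons (events w) (a, false).
Proof. by rewrite /events rev_rcons /= mem_rev. Qed.

Lemma mem_events_first x w : ((x, false) \in events w) = (x \in w).
Proof.
elim/last_ind: w => // w a IH.
rewrite events_rcons; case: ifP => aw; rewrite !mem_rcons !in_cons.
  rewrite mem_rem_neq ?xpair_eqE ?andbF // IH.
  by case: (x =P a) => [->|]; rewrite ?aw.
by rewrite IH xpair_eqE andbT.
Qed.

Lemma mem_events_last x w : ((x, true) \in events w) = (1 < count_mem x w).
Proof.
elim/last_ind: w => // w a IH.
rewrite events_rcons count_mem_rcons; case: ifP => aw.
  rewrite mem_rcons in_cons xpair_eqE andbT.
  case: (eqVneq a x) => [<-|ax] /=; first by rewrite addn1 ltnS -has_count has_pred1.
  by rewrite mem_rem_neq ?IH ?addn0 // xpair_eqE andbT eq_sym.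
rewrite mem_rcons in_cons xpair_eqE andbF /= IH.
by case: (a =P x) => [<-|]; rewrite ?(count_memPn (negbT aw)) ?addn0.
Qed.

Lemma mem_events w e : e \in events w -> e.1 \in w.
Proof.
case: e => x [] /=; last by rewrite mem_events_first.
by rewrite mem_events_last -has_pred1 has_count; apply: ltnW.
Qed.

Definition event_pos w (e : nat * bool) : nat :=
  if e.2 then last_index e.1 w else index e.1 w.

Definition event_lt w : rel (nat * bool) :=
  fun e1 e2 => event_pos w e1 < event_pos w e2.

Lemma event_lt_trans w : transitive (event_lt w).
Proof. by move=> e2 e1 e3; apply: ltn_trans. Qed.

Lemma event_lt_irr w : irreflexive (event_lt w).
Proof. by move=> e; apply: ltnn. Qed.

Lemma event_pos_lt w e : e.1 \in w -> event_pos w e < size w.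
Proof. by case: e => x [] /= xw; rewrite /event_pos /= ?last_index_lt ?index_mem. Qed.

Lemma event_pos_rcons w a e : e.1 \in w -> e != (a, true) ->
  event_pos (rcons w a) e = event_pos w e.
Proof.
case: e => x [] /= xw; rewrite /event_pos /= ?index_rcons ?xw //.
by rewrite xpair_eqE andbT last_index_rcons => /negbTE ->.
Qed.

Lemma sorted_events w : sorted (event_lt w) (events w).
Proof.
elim/last_ind: w => // w a IH.
have extend es e0 :
    sorted (event_lt w) es -> {in es, forall e, e.1 \in w /\ e != (a, true)} ->
    event_pos (rcons w a) e0 = size w -> sorted (event_lt (rcons w a)) (rcons es e0).
  move=> sorted_es es_old pos_e0.
  rewrite !sorted_pairwise // in sorted_es *; try exact: event_lt_trans.
  rewrite pairwise_rcons; apply/andP; split.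
    apply/allP=> e /es_old [ew ne]; rewrite /event_lt pos_e0 event_pos_rcons //.
    exact: event_pos_lt.
  rewrite (eq_in_pairwise (P := mem es) (r' := event_lt w)) ?allss //.
  by move=> e1 e2 /es_old [? ?] /es_old [? ?]; rewrite /event_lt !event_pos_rcons.
have uniq_E := sorted_uniq (@event_lt_trans w) (@event_lt_irr w) IH.
rewrite events_rcons; case: ifP => aw; apply: extend.
- by apply: subseq_sorted IH; [exact: event_lt_trans | exact: rem_subseq].
- move=> e e_rem; split; first by apply: mem_events; apply: mem_rem e_rem.
  by apply: contraTneq e_rem => ->; rewrite mem_rem_uniqF.
- by rewrite /event_pos /= last_index_rcons eqxx.
- exact: IH.
- move=> e /mem_events ew; split=> //.
  by apply: contraTneq ew => -> /=; rewrite aw.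
- by rewrite /event_pos /= index_rcons aw eqxx.
Qed.

Lemma uniq_events w : uniq (events w).
Proof. exact: sorted_uniq (@event_lt_trans w) (@event_lt_irr w) _ (sorted_events w). Qed.

Lemma events_split w a : 1 < count_mem a w ->
  exists p q r, events w = p ++ (a, false) :: q ++ (a, true) :: r /\
                all (fun e => e.1 != a) (p ++ q ++ r).
Proof.
move=> cnt; have a_w : a \in w by rewrite -has_pred1 has_count ltnW.
have := mem_events_first a w; rewrite a_w => first_in.
have := mem_events_last a w; rewrite cnt => last_in.
have := sorted_events w; have := uniq_events w; move: first_in.
case/splitPr: last_in => s r first_in uniq_E sorted_E.
have {first_in} : (a, false) \in s.
  move: first_in; rewrite mem_cat in_cons xpair_eqE andbF /= => /orP [//|a_r].
  move: sorted_E; rewrite sorted_pairwise; last exact: event_lt_trans.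
  rewrite pairwise_cat /= => /and4P [_ _ /allP/(_ _ a_r)].
  by rewrite /event_lt /event_pos /= ltnNge index_le_last_index.
move=> first_s; move: uniq_E; case/splitPr: first_s => p q.
rewrite -catA => uniq_E; exists p, q, r; split=> //.
have perm_E : perm_eq (p ++ (a, false) :: q ++ (a, true) :: r)
                      ((a, false) :: (a, true) :: p ++ q ++ r).
  by apply/permP=> P; rewrite /= !count_cat /= count_cat /=; lia.
move: uniq_E; rewrite (perm_uniq perm_E) /= in_cons negb_or.
move=> /and3P [/andP [_ nF] nT _].
apply/allP=> -[x b] e_in /=; apply: contraNneq (if b then nT else nF) => x_a.
by case: b e_in; rewrite x_a.
Qed.

End Occurrences.

(** * Invariants detected by the factors *)

Definition first_of_pair (x z : nat) (w : word) : option bool :=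
  ohead [seq y == x | y <- w & y \in [:: x; z]].

Lemma index_lt_first_of_pair (x z : nat) (w : word) : x != z ->
  (index x w < index z w) = (first_of_pair x z w == Some true).
Proof.
rewrite /first_of_pair => xz; elim: w => [|y w IH] /=; first by rewrite ltnn.
rewrite !inE; case: (eqVneq y x) => [->|yx] /=; first by rewrite (negbTE xz) eqxx.
case: (eqVneq y z) => [->|yz] /=; last by rewrite ltnS.
by rewrite [z == x]eq_sym (negbTE xz).
Qed.

Section FactorInvariants.
Variables (u v : word) (nu : u != [::]) (nv : v != [::]).
Implicit Types x z : nat.

Lemma Zm_count_mod m x : 0 < m ->
  satisfies (@Zm_op m) u v -> count_mem x u = count_mem x v %[mod m].
Proof.
move=> hm uv; pose F w : 'I_m := Ordinal (ltn_pmod (count_mem x w) hm).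
suff /(congr1 val) : F u = F v by [].
apply: (satisfies_invariant (phi := fun y => F [:: y])) uv nu nv => // s a _.
by apply: val_inj; rewrite /= count_mem_rcons addn0 modnDm.
Qed.

Lemma Nn_count_minn n x : 0 < n ->
  satisfies (adjI (@Nn_op n)) u v -> minn (count_mem x u) n = minn (count_mem x v) n.
Proof.
move=> hn uv; pose F w := Nn_pow n (count_mem x w).
suff /(congr1 (@Nn_exp n)) : F u = F v by rewrite !Nn_exp_pow.
apply: (satisfies_invariant (phi := fun y => F [:: y])) uv nu nv => // s a _.
by apply: Nn_exp_inj; rewrite Nn_exp_op !Nn_exp_pow // count_mem_rcons /=; lia.
Qed.

Lemma L2_index_lt x z :
  satisfies (adjI L2_op) u v -> (index x u < index z u) = (index x v < index z v).
Proof.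
move=> uv; case: (eqVneq x z) => [->|xz]; first by rewrite !ltnn.
rewrite !index_lt_first_of_pair //; congr (_ == _).
pose mark y := if y \in [:: x; z] then Some (y == x) else None.
apply: (satisfies_invariant (phi := mark) (F := first_of_pair x z)) uv nu nv.
  by move=> a; rewrite /first_of_pair /mark /=; case: ifP.
move=> s a _; rewrite /first_of_pair filter_rcons /mark; case: ifP => _.
  by rewrite map_rcons; case: [seq _ <- s | _].
by case: (ohead _).
Qed.

Lemma A0_occurs_before x z : x != z ->
  satisfies (adjI A0_op) u v -> occurs_before x z u = occurs_before x z v.
Proof.
move=> xz uv.
pose mark y := if y == x then Some A0e else if y == z then Some A0f else None.
pose F w := if occurs_before x z w then Some A0zero
            else if x \in w then Some (if z \in w then A0fe else A0e)
            else if z \in w then Some A0f else None.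
pose is_zero (p : option A0) := if p is Some A0zero then true else false.
have F_zero w : is_zero (F w) = occurs_before x z w.
  by rewrite /F; case: ifP => // _; do 2 case: ifP.
have zx : (z == x) = false by rewrite eq_sym (negbTE xz).
rewrite -!F_zero; congr is_zero.
apply: (satisfies_invariant (phi := mark)) uv nu nv => [a|s a _].
  rewrite /F /mark /occurs_before /last_index /= !inE.
  by case: (eqVneq a x) => [->|_]; [rewrite ?zx ?(negbTE xz) | case: (eqVneq a z)].
rewrite /F /mark occurs_before_rcons // !mem_rcons !in_cons.
have := @occurs_before_mem x z s.
case: (occurs_before x z s) => [/(_ isT)/andP [-> ->]|_] /=.
  by case: (a == x); case: (a == z).
case: (eqVneq a x) => [->|_]; rewrite ?(negbTE xz) ?zx.
  by case: (x \in s); case: (z \in s).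
by case: (eqVneq a z) => _; case: (x \in s); case: (z \in s).
Qed.

End FactorInvariants.

Lemma R2_last_index_lt u v x z : u != [::] -> v != [::] -> u =i v ->
  x \in u -> z \in u -> satisfies (adjI R2_op) u v ->
  (last_index x u < last_index z u) = (last_index x v < last_index z v).
Proof.
move=> nu nv eq_uv xu zu /satisfies_rev uv.
rewrite !ltn_last_index -?eq_uv //.
apply: L2_index_lt; try by rewrite -size_eq0 size_rev size_eq0.
have flip_R2 : (fun a b => adjI R2_op b a) =2 adjI L2_op by case=> [?|] [?|].
by apply/(eq_satisfies _ _ flip_R2)/uv/adjI_assoc.
Qed.

(** * Normal forms *)

Section NormalForm.
Variables (m n : nat).
Implicit Types (w : word) (a : nat).

Definition red_count k := if k < n then k else n + (k - n) %% m.

Definition first_block_len k := if 1 < k then (red_count k).-1 else 1.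

Definition event_block k (e : nat * bool) : word :=
  if e.2 then [:: e.1] else nseq (first_block_len k) e.1.

Definition normal_form w : word :=
  flatten [seq event_block (count_mem e.1 w) e | e <- events w].

Lemma red_count_eq a b :
  a = b %[mod m] -> minn a n = minn b n -> red_count a = red_count b.
Proof.
rewrite /red_count => eq_mod; case: ltnP => [lt_an | le_na] eq_min.
  by rewrite (_ : b = a) ?lt_an //; lia.
rewrite ltnNge (_ : n <= b) /=; last by lia.
by congr addn; apply/eqP; rewrite -(eqn_modDr n) !subnK //; [apply/eqP | lia].
Qed.

Lemma normal_form_rcons_split w a : 1 < count_mem a w ->
  exists p q r : word,
    normal_form w = p ++ nseq (first_block_len (count_mem a w)) a ++ q ++ [:: a] ++ r /\
    normal_form (rcons w a) =
      p ++ nseq (first_block_len (count_mem a w).+1) a ++ q ++ r ++ [:: a].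
Proof.
move=> cnt; have [p [q [r [E_w free]]]] := events_split cnt.
have a_w : a \in w by rewrite -has_pred1 has_count ltnW.
have free_sub es : {subset es <= p ++ q ++ r} -> {in es, forall e, e.1 != a}.
  by move=> sub e /sub; apply: (allP free).
have nT es : {subset es <= p ++ q ++ r} -> (a, true) \notin es.
  by move=> /free_sub es_a; apply/negP=> /es_a; rewrite eqxx.
have blocks es : {subset es <= p ++ q ++ r} ->
    [seq event_block (count_mem e.1 (rcons w a)) e | e <- es] =
    [seq event_block (count_mem e.1 w) e | e <- es].
  by move=> /free_sub es_a; apply/eq_in_map=> e /es_a e_a; rewrite count_mem_rcons_neq.
pose F es := flatten [seq event_block (count_mem e.1 w) e | e <- es].
exists (F p), (F q), (F r); split.
  by rewrite /normal_form E_w map_cat flatten_cat /= map_cat flatten_cat.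
have ne_FT : ((a, false) == (a, true)) = false by rewrite xpair_eqE andbF.
have nTp : (a, true) \notin p by apply: nT => e; rewrite mem_cat => ->.
have nTq : (a, true) \notin q by apply: nT => e; rewrite !mem_cat => ->; rewrite orbT.
rewrite /normal_form events_rcons a_w E_w rem_cat_notin // rem_cons ne_FT.
rewrite rem_cat_notin // rem_cons eqxx map_rcons flatten_rcons map_cat flatten_cat /=.
rewrite map_cat flatten_cat !blocks => [|e|e|e]; try by rewrite !mem_cat => ->; rewrite ?orbT.
by rewrite count_mem_rcons eqxx /= addn1 -!catA.
Qed.

Hypothesis hn : 1 < n.

Lemma red_count2 : red_count 2 = 2.
Proof.
by rewrite /red_count; case: ltnP => // n_le2; rewrite (_ : n = 2) ?subnn ?mod0n //; lia.
Qed.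

Lemma normal_form_rcons_short w a :
  count_mem a w <= 1 -> normal_form (rcons w a) = normal_form w ++ [:: a].
Proof.
move=> cnt; have nT : (a, true) \notin events w by rewrite mem_events_last -leqNgt.
have same_blocks : [seq event_block (count_mem e.1 (rcons w a)) e | e <- events w] =
                   [seq event_block (count_mem e.1 w) e | e <- events w].
  apply/eq_in_map=> -[x b] e_in /=.
  case: (eqVneq x a) => [xa|xa]; last by rewrite count_mem_rcons_neq.
  move: e_in; rewrite xa; case: b => [/negP //|_].
  rewrite /event_block /first_block_len /= count_mem_rcons eqxx.
  by case: (count_mem a w) cnt => [|[|]] // _; rewrite /= red_count2.
rewrite /normal_form events_rcons; case: ifP => a_w.
  by rewrite (rem_id nT) map_rcons flatten_rcons same_blocks.
rewrite map_rcons flatten_rcons same_blocks /event_block /= count_mem_rcons eqxx.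
by rewrite (count_memPn (negbT a_w)).
Qed.

End NormalForm.

Section Derivations.
Variables (m n : nat) (hm : 0 < m) (hn : 1 < n).
Local Notation D := (derivable (Ax6p5 m n)).
Implicit Types (w y z : word) (a : nat).

Lemma derivable_catl w u v : D u v -> D (w ++ u) (w ++ v).
Proof. by move=> /(der_mul w [::]); rewrite !cats0. Qed.

Lemma derivable_catr w u v : D u v -> D (u ++ w) (v ++ w).
Proof. exact: der_mul [::] w u v. Qed.

Definition xyz_subst a y z : nat -> word := nth [:: a] [:: [:: a]; y; z].

Lemma derivable_xyz a y z u v : y != [::] -> z != [::] -> Ax6p5 m n u v ->
  D (wsubst (xyz_subst a y z) u) (wsubst (xyz_subst a y z) v).
Proof.
move=> ny nz uv; apply: der_subst; last exact: der_ax.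
by rewrite /xyz_subst; case=> [|[|[|i]]] //=; rewrite nth_nil.
Qed.

Lemma wsubst_xyz_nseq a y z k : wsubst (xyz_subst a y z) (nseq k 0) = nseq k a.
Proof. by elim: k => //= k; rewrite /wsubst /= => ->. Qed.

Lemma derivable_merge_middle a j Q R :
  D (nseq j.+1 a ++ Q ++ [:: a] ++ R ++ [:: a]) (nseq j.+2 a ++ Q ++ R ++ [:: a]).
Proof.
have -> : nseq j.+1 a ++ Q ++ [:: a] ++ R ++ [:: a] =
          [:: a] ++ (nseq j a ++ Q) ++ [:: a] ++ R ++ [:: a] by rewrite -catA.
have -> : nseq j.+2 a ++ Q ++ R ++ [:: a] = [:: a; a] ++ (nseq j a ++ Q) ++ R ++ [:: a].
  by rewrite -catA.
move: (nseq j a ++ Q) => Y; case: (eqVneq Y [::]) => [->|nY]; first exact: der_refl.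
case: (eqVneq R [::]) => [->|nR].
  by apply: der_sym; move: (derivable_xyz a nY nY (ax3 m n)); rewrite /wsubst /xyz_subst /=.
by move: (derivable_xyz a nY nR (ax4 m n)); rewrite /wsubst /xyz_subst /=.
Qed.

Lemma derivable_pow_reduce a Y :
  D (nseq (m + n - 1) a ++ Y ++ [:: a]) (nseq (n - 1) a ++ Y ++ [:: a]).
Proof.
case: (eqVneq Y [::]) => [->|nY].
  have nseqS k : nseq k a ++ [:: a] = nseq k.+1 a by rewrite -addn1 nseqD.
  rewrite /= !nseqS; have -> : (m + n - 1).+1 = m + n by lia.
  have -> : (n - 1).+1 = n by lia.
  move: (derivable_xyz a (y := [:: a]) (z := [:: a]) isT isT (ax1 m n)).
  by rewrite !wsubst_xyz_nseq.
move: (derivable_xyz a nY nY (ax2 m n)).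
by rewrite /wsubst !map_cat !flatten_cat -!/(wsubst _ _) !wsubst_xyz_nseq /xyz_subst /=.
Qed.

Lemma red_count_gt1 k : 1 < k -> 1 < red_count m n k.
Proof. by rewrite /red_count; case: ifP => _; lia. Qed.

Lemma red_count_succ k :
  (red_count m n k.+1).-1 = red_count m n k \/
  red_count m n k = m + n - 1 /\ (red_count m n k.+1).-1 = n - 1.
Proof.
rewrite /red_count; case: (ltnP k.+1 n) => [lt_k1n|le_nk1]; first by rewrite ltnW //; left.
case: (ltnP k n) => [lt_kn|le_nk].
  have -> : k.+1 = n by lia.
  by left; rewrite subnn mod0n; lia.
rewrite subSn // -addn1 -modnDml; have := ltn_pmod (k - n) hm.
case: (ltngtP ((k - n) %% m).+1 m) => [lt_r1m|//|eq_r1m] _.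
  by left; rewrite addn1 modn_small //; lia.
by right; rewrite addn1 eq_r1m modnn; lia.
Qed.

Lemma derivable_block_step a k Q R : 1 < k ->
  D (nseq (first_block_len m n k) a ++ Q ++ [:: a] ++ R ++ [:: a])
    (nseq (first_block_len m n k.+1) a ++ Q ++ R ++ [:: a]).
Proof.
rewrite /first_block_len => lt_1k; rewrite lt_1k ltnW //.
have := red_count_gt1 lt_1k; have := red_count_succ k.
move: (red_count m n k) (red_count m n k.+1) => c c' step lt_1c.
rewrite (_ : c.-1 = (c - 2).+1); last by lia.
apply: der_trans (derivable_merge_middle _ _ _ _) _.
rewrite (_ : (c - 2).+2 = c); last by lia.
case: step => [-> | [-> ->]]; first exact: der_refl.
by rewrite ![Q ++ _]catA; apply: derivable_pow_reduce.
Qed.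

Lemma derivable_normal_form_rcons w a :
  D (normal_form m n w ++ [:: a]) (normal_form m n (rcons w a)).
Proof.
case: (leqP (count_mem a w) 1) => cnt.
  by rewrite normal_form_rcons_short //; apply: der_refl.
have [p [q [r [-> ->]]]] := normal_form_rcons_split m n cnt.
by rewrite -!catA; apply: derivable_catl; apply: derivable_block_step.
Qed.

Lemma derivable_normal_form w : D w (normal_form m n w).
Proof.
elim/last_ind: w => [|w a IH]; first exact: der_refl.
apply: der_trans _ (derivable_normal_form_rcons w a).
by rewrite -cats1; apply: derivable_catr.
Qed.

End Derivations.

Lemma eq_mem_count_minn n (s t : word) : 0 < n ->
  (forall x, minn (count_mem x s) n = minn (count_mem x t) n) -> s =i t.
Proof.
move=> n_gt0 cnt x; have := cnt x; rewrite -!has_pred1 !has_count.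
by case: (count_mem x s) => [|?]; case: (count_mem x t) => [|?] //=; lia.
Qed.

Section NormalFormUnique.
Variables (m n : nat) (u v : word).
Implicit Types x z : nat.
Hypothesis hn : 1 < n.
Hypothesis count_mod : forall x, count_mem x u = count_mem x v %[mod m].
Hypothesis count_min : forall x, minn (count_mem x u) n = minn (count_mem x v) n.
Hypothesis first_lt : forall x z, (index x u < index z u) = (index x v < index z v).
Hypothesis last_lt : forall x z, x \in u -> z \in u ->
  (last_index x u < last_index z u) = (last_index x v < last_index z v).
Hypothesis before_eq : forall x z, x != z -> occurs_before x z u = occurs_before x z v.

Let eq_uv : u =i v := eq_mem_count_minn (ltnW hn) count_min.

Lemma count_gt1_eq x : (1 < count_mem x u) = (1 < count_mem x v).
Proof. by move: (count_min x) => eq_min; apply/idP/idP; lia. Qed.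

Lemma events_mem_eq : events u =i events v.
Proof. by case=> x []; rewrite ?mem_events_last ?mem_events_first ?count_gt1_eq ?eq_uv. Qed.

Lemma event_lt_sub : {in events v &, subrel (event_lt v) (event_lt u)}.
Proof.
move=> [x b] [z c] e1 e2; rewrite /event_lt /event_pos /=.
have xv : x \in v := mem_events e1; have zv : z \in v := mem_events e2.
have xu : x \in u by rewrite eq_uv.
have zu : z \in u by rewrite eq_uv.
case: (eqVneq x z) => [eq_xz|xz].
  subst z; case: b c e1 e2 => -[] e1 e2; rewrite ?ltnn //.
    by rewrite ltnNge index_le_last_index.
  by move=> _; rewrite index_lt_last_index // count_gt1_eq -mem_events_last.
case: b c e1 e2 => -[] _ _ lt_v; first by rewrite last_lt.
- have zx : z != x by rewrite eq_sym.
  move: (before_eq zx); rewrite /occurs_before [in RHS]ltnNge (ltnW lt_v) /=.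
  move=> /negbT; rewrite -leqNgt leq_eqVlt => /orP [/eqP eq_pos|//].
  by move: xz; rewrite -(nth_last_index 0 xu) eq_pos nth_index ?eqxx.
- by move: (before_eq xz); rewrite /occurs_before lt_v => ->.
- by rewrite first_lt.
Qed.

Lemma events_eq : events u = events v.
Proof.
apply: (irr_sorted_eq (@event_lt_trans u) (@event_lt_irr u)) events_mem_eq.
  exact: sorted_events.
apply: (sub_in_sorted (P := mem (events v)) (e := event_lt v)) (sorted_events v).
  exact: event_lt_sub.
exact: allss.
Qed.

Lemma normal_form_eq : normal_form m n u = normal_form m n v.
Proof.
rewrite /normal_form events_eq; congr flatten; apply: eq_map => -[x b].
rewrite /event_block /first_block_len count_gt1_eq.
by rewrite (red_count_eq (count_mod x) (count_min x)).
Qed.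

End NormalFormUnique.

Lemma S6p5_normal_form_eq m n u v : 0 < m -> 1 < n -> u != [::] -> v != [::] ->
  satisfies (@S6p5_op m n) u v -> normal_form m n u = normal_form m n v.
Proof.
move=> hm hn nu nv; rewrite satisfies_S6p5 // => -[uvZ uvN uvL uvR uvA].
have count_min x := Nn_count_minn nu nv x (ltnW hn) uvN.
have eq_uv := eq_mem_count_minn (ltnW hn) count_min.
apply: normal_form_eq hn _ count_min _ _ _ => [x|x z|x z xu zu|x z xz].
- exact: (Zm_count_mod nu nv _ hm uvZ).
- exact: L2_index_lt nu nv x z uvL.
- exact: R2_last_index_lt nu nv eq_uv xu zu uvR.
- exact: A0_occurs_before nu nv x z xz uvA.
Qed.

Theorem proposition6p5 (m n : nat) (hm : 1 <= m) (hn : 2 <= n) :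
  forall u v : word, u != [::] -> v != [::] ->
    (satisfies (@S6p5_op m n) u v <-> derivable (Ax6p5 m n) u v).
Proof.
move=> u v nu nv; split; last exact: S6p5_derivable_satisfies.
move=> /(S6p5_normal_form_eq hm hn nu nv) nf_eq.
apply: der_trans (derivable_normal_form hm hn u) _.
by rewrite nf_eq; apply/der_sym/derivable_normal_form.
Qed.
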